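(* Let $F\in\mathcal{F}^n$ with radial function $\rho$. For $x\in\mathbf{S}^n$, let $M(x)$ be an outward normal vector to a hyperplane supporting $F$ at $r(x)=\rho(x)x$, rescaled so that $\langle M(x),x\rangle=\rho(x)$. Then $v=-M(x)+\rho(x)x\in\partial\rho(x)$. Conversely, for each $v\in\partial\rho(x)$ there exists a unique hyperplane supporting $F$ at $r(x)$ with outward normal $M(x)$ such that $v=-M(x)+\rho(x)x$.
   Context: $\mathbf{S}^n$ is the unit sphere in $\mathbb{R}^{n+1}$, $n\ge1$, centered at the origin $\mathcal{O}$. $\mathcal{F}^n$ is the set of boundaries of compact convex sets in $\mathbb{R}^{n+1}$ containing $\mathcal{O}$ in their interior; for $F\in\mathcal{F}^n$ its radial function $\rho(x)$ is the distance from $\mathcal{O}$ to the point where the ray in direction $x\in\mathbf{S}^n$ meets $F$. For $f\in C(\mathbf{S}^n)$ and $x_0\in\mathbf{S}^n$, with tangent space $T\mathbf{S}^n_{x_0}=\{v\in\mathbb{R}^{n+1}:\langle v,x_0\rangle=0\}$, the subdifferential of $f$ at $x_0$ is $\partial f(x_0)=\{v\in T\mathbf{S}^n_{x_0}: f(x)\langle -v+f(x_0)x_0,x\rangle\le f^2(x_0)\ \forall x\in\mathbf{S}^n\}$. *)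

From mathcomp Require Import all_boot all_order all_algebra all_classical all_reals all_analysis.
Import numFieldNormedType.Exports.
Set Implicit Arguments. Unset Strict Implicit. Unset Printing Implicit Defensive.
Import Order.TTheory GRing.Theory Num.Theory.
Local Open Scope classical_set_scope.
Local Open Scope ring_scope.

Definition dotv (R : realType) (n : nat) (u v : 'rV[R]_n.+1) : R := (u *m v^T) 0 0.

Definition sphere (R : realType) (n : nat) : set 'rV[R]_n.+1 :=
  [set x | dotv x x = 1].

Definition convex_setv (R : realType) (n : nat) (K : set 'rV[R]_n.+1) : Prop :=
  forall x y (t : R), K x -> K y -> 0 <= t -> t <= 1 -> K (t *: x + (1 - t) *: y).

Definition convex_body0 (R : realType) (n : nat) (K : set 'rV[R]_n.+1) : Prop :=
  [/\ compact K, convex_setv K & interior K 0].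

(* Topological boundary of K; F = boundary K is an element of \mathcal{F}^n. *)
Definition boundary (R : realType) (n : nat) (K : set 'rV[R]_n.+1) : set 'rV[R]_n.+1 :=
  closure K `\` interior K.

(* rho is the radial function of F: for x in S^n, rho x is the distance from the
   origin to the point where the ray in direction x meets F, i.e. rho x >= 0 and
   rho x *: x lies on F (this point is unique for F in \mathcal{F}^n). *)
Definition radial_function (R : realType) (n : nat) (F : set 'rV[R]_n.+1)
  (rho : 'rV[R]_n.+1 -> R) : Prop :=
  forall x, sphere x -> 0 <= rho x /\ F (rho x *: x).

Definition subdiff (R : realType) (n : nat) (f : 'rV[R]_n.+1 -> R) (x0 : 'rV[R]_n.+1)
  : set 'rV[R]_n.+1 :=
  [set v | dotv v x0 = 0 /\
     forall x, sphere x -> f x * dotv (- v + f x0 *: x0) x <= f x0 ^+ 2].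

(* N is an outward normal vector of a hyperplane supporting the convex body K
   (with boundary F) at the point p: the hyperplane {y | <N,y> = <N,p>} passes
   through p and K lies on the side {y | <N,y> <= <N,p>}. *)
Definition outward_support_normal (R : realType) (n : nat) (K : set 'rV[R]_n.+1)
  (p N : 'rV[R]_n.+1) : Prop :=
  N != 0 /\ forall y, K y -> dotv N y <= dotv N p.

From mathcomp Require Import all_boot all_order all_algebra all_classical all_reals all_analysis.
Import numFieldNormedType.Exports.
Set Implicit Arguments. Unset Strict Implicit. Unset Printing Implicit Defensive.
Import Order.TTheory GRing.Theory Num.Theory.
Local Open Scope classical_set_scope.
Local Open Scope ring_scope.

(* Write N := -v + rho(x) x.  Any y in K is s z with z on the sphere and
   0 <= s <= rho(z), since points strictly before the boundary on a ray from
   the interior point 0 are interior.  Hence "<N, y> <= rho(x)^2 for y in K"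
   (N is an outward support normal at rho(x) x with <N, x> = rho(x)) and
   "rho(z) <N, z> <= rho(x)^2 for z on the sphere" (v is a subgradient) are
   the same condition, and N is determined by v. *)

Section DotProduct.
Variables (R : realType) (n : nat).
Implicit Types (u v w : 'rV[R]_n.+1).

Lemma dotvE u v : dotv u v = \sum_i u 0 i * v 0 i.
Proof. by rewrite /dotv !mxE; apply: eq_bigr => i _; rewrite mxE. Qed.

Lemma dotvC u v : dotv u v = dotv v u.
Proof. by rewrite !dotvE; apply: eq_bigr => i _; rewrite mulrC. Qed.

Lemma dotvDl u v w : dotv (u + v) w = dotv u w + dotv v w.
Proof. by rewrite !dotvE -big_split; apply: eq_bigr => i _; rewrite mxE mulrDl. Qed.

Lemma dotvNl u w : dotv (- u) w = - dotv u w.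
Proof. by rewrite !dotvE -sumrN; apply: eq_bigr => i _; rewrite mxE mulNr. Qed.

Lemma dotvZl a u w : dotv (a *: u) w = a * dotv u w.
Proof. by rewrite !dotvE mulr_sumr; apply: eq_bigr => i _; rewrite mxE mulrA. Qed.

Lemma dotvZr a u w : dotv u (a *: w) = a * dotv u w.
Proof. by rewrite dotvC dotvZl dotvC. Qed.

Lemma dotv0r u : dotv u 0 = 0.
Proof. by rewrite -(scale0r 0) dotvZr mul0r. Qed.

Lemma dotvv_ge0 u : 0 <= dotv u u.
Proof. by rewrite dotvE; apply: sumr_ge0 => i _; rewrite -expr2 sqr_ge0. Qed.

Lemma dotvv_eq0 u : (dotv u u == 0) = (u == 0).
Proof.
apply/eqP/eqP => [uu0|->]; last exact: dotv0r.
apply/rowP => i; rewrite mxE; apply/eqP; rewrite -sqrf_eq0 expr2.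
move: uu0; rewrite dotvE => /psumr_eq0P -> //= j _.
by rewrite -expr2 sqr_ge0.
Qed.

Lemma sphere_polar w : w != 0 ->
  exists s z, [/\ 0 < s, sphere z & w = s *: z].
Proof.
move=> w0; set s := Num.sqrt (dotv w w).
have s_gt0 : 0 < s by rewrite sqrtr_gt0 lt0r dotvv_eq0 w0 dotvv_ge0.
exists s, (s^-1 *: w); split => //; last first.
  by rewrite scalerA mulfV ?gt_eqF // scale1r.
rewrite /sphere /= dotvZl dotvZr mulrA -expr2 exprVn.
by rewrite sqr_sqrtr ?dotvv_ge0 // mulVf // dotvv_eq0.
Qed.

End DotProduct.

Lemma convex_interior_segment (R : realType) (n : nat) (K : set 'rV[R]_n.+1)
    (y : 'rV[R]_n.+1) (t : R) :
  convex_setv K -> interior K 0 -> K y -> 0 <= t < 1 -> interior K (t *: y).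
Proof.
move=> cK /nbhs_ballP [e e_gt0 ballK] Ky /andP [t_ge0 t_lt1].
have t1_gt0 : 0 < 1 - t by rewrite subr_gt0.
apply/nbhs_ballP; exists ((1 - t) * e); first by rewrite /= mulr_gt0.
move=> w; rewrite -ball_normE /= => tyw.
set u := (1 - t)^-1 *: (w - t *: y).
have Ku : K u.
  apply: ballK; rewrite -ball_normE /= sub0r normrN normrZ.
  by rewrite ger0_norm ?invr_ge0 ?ltW // ltr_pdivrMl // -normrN opprB.
have -> : w = t *: y + (1 - t) *: u.
  by rewrite /u scalerA mulfV ?gt_eqF // scale1r addrC subrK.
by apply: cK => //; exact: ltW.
Qed.

Section RadialFunction.
Variables (R : realType) (n : nat) (K : set 'rV[R]_n.+1).
Hypothesis hK : convex_body0 K.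
Variable rho : 'rV[R]_n.+1 -> R.
Hypothesis hrho : radial_function (boundary K) rho.

Lemma boundary_convex_body z : boundary K z -> K z /\ ~ interior K z.
Proof.
have [cpK _ _] := hK; move=> [Kz notiz]; split => //.
by rewrite (closure_id K).1 //; apply: compact_closed => //; exact: norm_hausdorff.
Qed.

Lemma radial_mem z : sphere z -> K (rho z *: z).
Proof. by move=> /hrho [_ /boundary_convex_body []]. Qed.

Lemma radial_gt0 z : sphere z -> 0 < rho z.
Proof.
move=> /hrho [rz_ge0 /boundary_convex_body [_ notint]].
rewrite lt0r rz_ge0 andbT; apply: contra_notN notint => /eqP ->.
by rewrite scale0r; case: hK.
Qed.

Lemma radial_ge s z : 0 < s -> sphere z -> K (s *: z) -> s <= rho z.
Proof.
move=> s_gt0 /hrho [rz_ge0 /boundary_convex_body [_ notint]] Ksz.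
rewrite leNgt; apply/negP => rz_lt_s; apply: notint.
have [_ cK i0] := hK.
have -> : rho z *: z = (rho z / s) *: (s *: z).
  by rewrite scalerA mulfVK ?gt_eqF.
apply: convex_interior_segment => //.
by rewrite divr_ge0 ?(ltW s_gt0) //= ltr_pdivrMr // mul1r.
Qed.

Variable x : 'rV[R]_n.+1.
Hypothesis hx : sphere x.

Lemma support_normal_subdiff M :
  outward_support_normal K (rho x *: x) M -> dotv M x = rho x ->
  subdiff rho x (- M + rho x *: x).
Proof.
move=> [_ supM] Mx; split.
  by rewrite dotvDl dotvNl Mx dotvZl hx mulr1 addNr.
move=> z hz; rewrite opprD opprK subrK -dotvZr.
by rewrite (le_trans (supM _ (radial_mem hz))) // dotvZr Mx expr2.
Qed.

Lemma subdiff_support_normal v : subdiff rho x v ->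
  outward_support_normal K (rho x *: x) (- v + rho x *: x) /\
  dotv (- v + rho x *: x) x = rho x.
Proof.
move=> [vx subv]; set N := - v + rho x *: x.
have Nx : dotv N x = rho x by rewrite dotvDl dotvNl vx dotvZl hx mulr1 oppr0 add0r.
split => //; split.
  apply: contraTneq (radial_gt0 hx) => N0.
  by rewrite -Nx N0 dotvC dotv0r ltxx.
move=> y Ky; rewrite dotvZr Nx -expr2.
have [->|y0] := eqVneq y 0; first by rewrite dotv0r sqr_ge0.
have [s [z [s_gt0 hz yE]]] := sphere_polar y0.
rewrite yE in Ky *; have s_le := radial_ge s_gt0 hz Ky.
rewrite dotvZr; have [Nz_le0|Nz_gt0] := leP (dotv N z) 0.
  by apply: le_trans (sqr_ge0 _); rewrite mulr_ge0_le0 // ltW.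
by apply: le_trans (subv z hz); rewrite ler_pM2r.
Qed.

End RadialFunction.

Theorem proposition9 (R : realType) (n : nat) (hn : (1 <= n)%N)
  (K : set 'rV[R]_n.+1) (hK : convex_body0 K)
  (rho : 'rV[R]_n.+1 -> R) (hrho : radial_function (boundary K) rho)
  (x : 'rV[R]_n.+1) (hx : sphere x) :
  (forall M : 'rV[R]_n.+1,
     outward_support_normal K (rho x *: x) M -> dotv M x = rho x ->
     subdiff rho x (- M + rho x *: x))
  /\
  (forall v : 'rV[R]_n.+1, subdiff rho x v ->
     exists! M : 'rV[R]_n.+1,
       [/\ outward_support_normal K (rho x *: x) M, dotv M x = rho x
         & v = - M + rho x *: x]).
Proof.
split; first exact: support_normal_subdiff.
move=> v subv; exists (- v + rho x *: x).
have [supN Nx] := subdiff_support_normal hK hrho hx subv.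
split; first by split; rewrite // opprD opprK subrK.
by move=> M [_ _ ->]; rewrite opprD opprK subrK.
Qed.
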